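(* Let $E$ and $F$ be complex Banach spaces, let $A_m:\mathrm{dom}(A_m)\subseteq E\to E$ and $B:\mathrm{dom}(B)\subseteq F\to F$ be linear operators, and let $L:\mathrm{dom}(A_m)\to F$ be linear, surjective and bounded with respect to the graph norm of $A_m$. Assume that the restriction $A_0$ of $A_m$ to $\ker(L)$ generates a strongly continuous semigroup $(T_0(t))_{t\ge0}$ on $E$, that $B$ generates a strongly continuous semigroup $(S(t))_{t\ge0}$ on $F$, that $x\mapsto(A_mx,Lx)$, $\mathrm{dom}(A_m)\to E\times F$, is closed, and that $A_0$ and $B$ are boundedly invertible. Let $D_0:=(L|_{\ker(A_m)})^{-1}:F\to E$. For $y\in\mathrm{dom}(B)$ and $t\ge0$ let $Q(t)y=D_0S(t)y-T_0(t)D_0y-\int_0^tT_0(t-s)D_0S(s)By\,\mathrm{d}s$, and assume that each $Q(t)$ extends to a bounded operator $F\to E$ with $\limsup_{t\downarrow0}\|Q(t)\|<\infty$; let $\mathcal{T}(t)=\begin{pmatrix}T_0(t)&Q(t)\\0&S(t)\end{pmatrix}$ on $E\times F$, normed by $\|(x,y)\|=\|x\|+\|y\|$. For each $\tau>0$ let $V(\tau):\mathrm{dom}(B)\to E$ be linear, $\mathbb{T}(\tau)=\begin{pmatrix}T_0(\tau)&V(\tau)\\0&S(\tau)\end{pmatrix}$, $V_n(\tau)=\sum_{j=0}^{n-1}T_0((n-1-j)\tau)V(\tau)S(j\tau)$, and $\mathcal{R}_0=\begin{pmatrix}I&-D_0\\0&I\end{pmatrix}$. Let $D\subseteq\mathrm{dom}(B)$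 be a subspace equipped with a norm $\|\cdot\|_D$, let $r\ge0$, $t_{\max}>0$ and $C\ge0$ be such that for every $y\in D$, every $t\in[0,t_{\max}]$ and every integer $n\ge1$ \[ \Bigl\|V_n(\tfrac tn)y+\int_0^tT_0(t-s)D_0S(s)By\,\mathrm{d}s\Bigr\|\le\frac{Ct^r\log(n)}{n^r}\|y\|_D. \] Then for every $x\in E$, $y\in D$, $t\in[0,t_{\max}]$ and integer $n\ge1$, \[ \Bigl\|\mathcal{R}_0^{-1}\mathbb{T}(\tfrac tn)^n\mathcal{R}_0\binom{x}{y}-\mathcal{T}(t)\binom{x}{y}\Bigr\|\le\frac{Ct^r\log(n)}{n^r}\|y\|_D. \] In particular, for every $p\in(0,r)$ and every $\boldsymbol{u}_0\in E\times D$ there is $C'\ge0$ with $\|\mathcal{T}(t)\boldsymbol{u}_0-\mathcal{R}_0^{-1}\mathbb{T}(\tfrac tn)^n\mathcal{R}_0\boldsymbol{u}_0\|\le C'n^{-p}$ for all $t\in[0,t_{\max}]$ and all integers $n\ge1$.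
   Context: Under the stated assumptions $D_0$ is bounded and $(\mathcal{T}(t))_{t\ge0}$ is the $C_0$-semigroup generated by $\mathrm{diag}(A_m,B)$ with domain $\{(x,y)\in\mathrm{dom}(A_m)\times\mathrm{dom}(B):Lx=y\}$. *)

From HB Require Import structures.
From mathcomp Require Import all_boot all_order all_algebra.
From mathcomp Require Import all_classical all_reals all_analysis.
From mathcomp Require Import complex.
Set Implicit Arguments. Unset Strict Implicit. Unset Printing Implicit Defensive.
Import Order.TTheory GRing.Theory Num.Theory.
Import numFieldNormedType.Exports.
Local Open Scope ring_scope.
Local Open Scope classical_set_scope.

Section Defs.
Variable R : realType.
Local Notation C := R[i].

Definition rC (r : R) : C := (r%:C)%C.

Definition lin_subspace (V : lmodType C) (D : set V) :=
  D 0 /\ forall (a : C) x y, D x -> D y -> D (a *: x + y).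

Definition linear_on (V W : lmodType C) (D : set V) (f : V -> W) :=
  forall (a : C) x y, D x -> D y -> f (a *: x + y) = a *: f x + f y.

Definition bounded_linear (V W : normedModType C) (f : V -> W) :=
  linear_on setT f /\ continuous f.

Definition C0_semigroup (V : normedModType C) (T : R -> V -> V) :=
  [/\ forall t, 0 <= t -> bounded_linear (T t),
      forall x, T 0 x = x,
      forall t s x, 0 <= t -> 0 <= s -> T (t + s) x = T t (T s x) &
      forall x, (fun t => T t x) @ at_right 0 --> x ].

Definition dquot (V : normedModType C) (T : R -> V -> V) (x : V) :=
  fun h : R => rC h^-1 *: (T h x - x).

Definition generates (V : normedModType C) (T : R -> V -> V)
    (domA : set V) (A : V -> V) :=
  C0_semigroup T /\
  forall x, (domA x <-> exists l : V, dquot T x @ at_right 0 --> l) /\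
            (domA x -> dquot T x @ at_right 0 --> A x).

Definition boundedly_invertible (V : normedModType C) (domA : set V)
    (A : V -> V) :=
  exists Ainv : V -> V, bounded_linear Ainv /\
    (forall y, domA (Ainv y) /\ A (Ainv y) = y) /\
    (forall x, domA x -> Ainv (A x) = x).

(* Riemann integral \int_a^b g(s) ds of a (continuous) vector-valued
   function, as the limit of the uniform left Riemann sums *)
Definition rint (V : normedModType C) (g : R -> V) (a b : R) : V :=
  lim ((fun n : nat => rC ((b - a) / n.+1%:R) *:
          \sum_(i < n.+1) g (a + i%:R * ((b - a) / n.+1%:R))) @ \oo).

Section Ops.
Variables (E F : normedModType C).

Definition pnorm (p : E * F) : C := `|p.1| + `|p.2|.

Definition bbT (T0 : R -> E -> E) (V : R -> F -> E) (S : R -> F -> F)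
    (tau : R) (p : E * F) : E * F :=
  (T0 tau p.1 + V tau p.2, S tau p.2).

Definition calT (T0 : R -> E -> E) (Q : R -> F -> E) (S : R -> F -> F)
    (t : R) (p : E * F) : E * F :=
  (T0 t p.1 + Q t p.2, S t p.2).

Definition R0 (D0 : F -> E) (p : E * F) : E * F := (p.1 - D0 p.2, p.2).
Definition R0inv (D0 : F -> E) (p : E * F) : E * F := (p.1 + D0 p.2, p.2).

Definition Vn (T0 : R -> E -> E) (V : R -> F -> E) (S : R -> F -> F)
    (n : nat) (tau : R) (y : F) : E :=
  \sum_(j < n) T0 ((n.-1 - j)%N%:R * tau) (V tau (S (j%:R * tau) y)).
End Ops.
End Defs.

From HB Require Import structures.
From mathcomp Require Import all_boot all_order all_algebra.
From mathcomp Require Import all_classical all_reals all_analysis.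
From mathcomp Require Import complex.
From mathcomp Require Import zify ring lra.
Import Order.TTheory GRing.Theory Num.Theory.
Import numFieldNormedType.Exports.
Local Open Scope ring_scope.
Local Open Scope classical_set_scope.

(* Write tau = t/n.  By induction, bbT(tau)^n (u, y) = (T0(t) u + V_n(tau) y, S(t) y),
   so conjugating by R_0 gives first component
   T0(t) x - T0(t) D0 y + V_n(tau) y + D0 S(t) y.  Subtracting the first component
   T0(t) x + Q(t) y of calT(t) (x, y), where Q(t) y = D0 S(t) y - T0(t) D0 y - int_0^t ...,
   leaves exactly (V_n(tau) y + int_0^t T0(t-s) D0 S(s) B y ds, 0).  The estimate is
   therefore the hypothesis itself, and the polynomial rate follows from
   ln n <= n^(r-p) / (r-p). *)

Section LinearOnT.
Context {R : realType} {V W : lmodType R[i]} {f : V -> W}.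
Hypothesis f_lin : linear_on setT f.

Lemma linear_onT_add u v : f (u + v) = f u + f v.
Proof. by have := f_lin 1 u v I I; rewrite !scale1r. Qed.

Lemma linear_onT0 : f 0 = 0.
Proof. by apply/esym/(addrI (f 0)); rewrite -linear_onT_add !addr0. Qed.

Lemma linear_onT_sub u v : f (u - v) = f u - f v.
Proof.
rewrite linear_onT_add; congr (_ + _).
by have := f_lin (-1) v 0 I I; rewrite !addr0 linear_onT0 addr0 !scaleN1r.
Qed.
End LinearOnT.

Section BlockSemigroups.
Context {R : realType} {E F : normedModType R[i]}.
Variables (T0 : R -> E -> E) (V : R -> F -> E) (S : R -> F -> F).
Hypotheses (T0_sg : C0_semigroup T0) (S_sg : C0_semigroup S).

Lemma iter_bbT tau u y k : 0 <= tau ->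
  iter k (bbT T0 V S tau) (u, y) =
    (T0 (k%:R * tau) u + Vn T0 V S k tau y, S (k%:R * tau) y).
Proof.
case: T0_sg S_sg => T0_lin T00 T0D _ [_ S0 SD _] tau_ge0.
have mul_ge0 (m : nat) : 0 <= m%:R * tau by rewrite mulr_ge0.
have [T0tau_lin _] := T0_lin _ tau_ge0.
elim: k => [|k IHk]; first by rewrite /Vn big_ord0 mul0r T00 S0 addr0.
rewrite iterS IHk /bbT /= -SD // -nat1r mulrDl mul1r; congr (_, _).
rewrite linear_onT_add // -T0D // -addrA; congr (_ + _).
rewrite /Vn big_ord_recr /= subnn mul0r T00; congr (_ + _).
rewrite (big_morph (T0 tau) (linear_onT_add T0tau_lin) (linear_onT0 T0tau_lin)).
apply: eq_bigr => j _ /=; rewrite -T0D //; congr (T0 _ _).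
have -> : (k - j)%N = (k.-1 - j).+1 by have := ltn_ord j; lia.
by rewrite -nat1r mulrDl mul1r.
Qed.

Lemma pnorm_R0inv_iter_bbT_sub_calT (D0 : F -> E) (Q : R -> F -> E) (J : E) t n x y :
  0 <= t -> (0 < n)%N -> Q t y = D0 (S t y) - T0 t (D0 y) - J ->
  pnorm (R0inv D0 (iter n (bbT T0 V S (t / n%:R)) (R0 D0 (x, y)))
         - calT T0 Q S t (x, y)) = `|Vn T0 V S n (t / n%:R) y + J|.
Proof.
move=> t_ge0 n_gt0 Qty.
have cancel (a b c d e : E) : a - b + c + d - (a + (d - b - e)) = c + e.
  rewrite opprD !opprB addrACA [d + _]addrC [e + _]addrA subrK.
  by rewrite addrAC addrC !addrA addNr add0r addrC !addrA subrr add0r.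
have [T0_lin _ _ _] := T0_sg; have [T0t_lin _] := T0_lin t t_ge0.
rewrite /R0 /= iter_bbT; last by rewrite divr_ge0.
rewrite mulrC divfK ?pnatr_eq0 -?lt0n //.
by rewrite /R0inv /calT /pnorm /= Qty (linear_onT_sub T0t_lin) cancel subrr normr0 addr0.
Qed.
End BlockSemigroups.

Lemma pnormN (R : realType) (E F : normedModType R[i]) (p : E * F) :
  pnorm (- p) = pnorm p.
Proof. by rewrite /pnorm /= !normrN. Qed.

Lemma ln_le_powR_div (R : realType) (n : nat) (q : R) :
  (1 <= n)%N -> 0 < q -> ln n%:R <= n%:R `^ q / q.
Proof.
move=> n_ge1 q_gt0; have n_gt0 : 0 < n%:R :> R by rewrite ltr0n.
have := ln_sublinear (powR_gt0 q n_gt0); rewrite ln_powR => lt_ln.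
by rewrite ler_pdivlMr // mulrC ltW.
Qed.

Lemma log_rate_le_powR (R : realType) (c N r p tmax t : R) (n : nat) :
  0 <= c -> 0 <= N -> 0 <= r -> p < r -> 0 <= t <= tmax -> (1 <= n)%N ->
  c * t `^ r * ln n%:R / n%:R `^ r * N
    <= c * tmax `^ r * N / (r - p) * n%:R `^ (- p).
Proof.
move=> c_ge0 N_ge0 r_ge0 p_lt_r /andP[t_ge0 t_le] n_ge1.
have rp_gt0 : 0 < r - p by rewrite subr_gt0.
have n_gt0 : 0 < n%:R :> R by rewrite ltr0n.
have nr_gt0 : 0 < n%:R `^ r := powR_gt0 r n_gt0.
have -> : n%:R `^ (- p) = n%:R `^ (r - p) / n%:R `^ r.
  by rewrite -powRB ?(gt_eqF n_gt0) ?implybT // addrAC subrr add0r.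
have tr_le : t `^ r <= tmax `^ r.
  by apply: ge0_ler_powR; rewrite ?nnegrE //; lra.
have ln_ge0 : 0 <= ln (n%:R : R) by apply: ln_ge0; rewrite ler1n.
have -> : c * t `^ r * ln n%:R / n%:R `^ r * N =
  (c * N / n%:R `^ r) * (t `^ r * ln n%:R) by ring.
have -> : c * tmax `^ r * N / (r - p) * (n%:R `^ (r - p) / n%:R `^ r) =
  (c * N / n%:R `^ r) * (tmax `^ r * (n%:R `^ (r - p) / (r - p))) by ring.
apply: ler_wpM2l; first by rewrite divr_ge0 ?mulr_ge0 // ltW.
by apply: ler_pM; rewrite ?powR_ge0 // ln_le_powR_div.
Qed.

Theorem proposition4p3 (R : realType)
  (E F : completeNormedModType R[i])
  (* A_m with domain dom(A_m), B with domain dom(B), L : dom(A_m) -> F *)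
  (domAm : set E) (Am : E -> E) (domB : set F) (B : F -> F) (L : E -> F)
  (T0 : R -> E -> E) (S : R -> F -> F)
  (D0 : F -> E) (Q : R -> F -> E) (V : R -> F -> E)
  (D : set F) (normD : F -> R) (r tmax c : R) :
  (* A_m and L linear, L surjective and bounded w.r.t. the graph norm *)
  lin_subspace domAm -> linear_on domAm Am -> linear_on domAm L ->
  (forall y, exists x, domAm x /\ L x = y) ->
  (exists k : R, forall x, domAm x -> `|L x| <= rC k * (`|x| + `|Am x|)) ->
  (* A_0 = A_m restricted to ker L generates T0; B generates S *)
  generates T0 (fun x => domAm x /\ L x = 0) Am ->
  generates S domB B ->
  (* x |-> (A_m x, L x) is closed *)
  closed [set z : E * (E * F) | exists x, domAm x /\ z = (x, (Am x, L x))] ->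
  (* A_0 and B are boundedly invertible *)
  boundedly_invertible (fun x => domAm x /\ L x = 0) Am ->
  boundedly_invertible domB B ->
  (* D0 = (L restricted to ker A_m)^{-1} *)
  (forall y, domAm (D0 y) /\ Am (D0 y) = 0 /\ L (D0 y) = y) ->
  (* Q(t) is the bounded extension of the given expression *)
  (forall t, 0 <= t -> bounded_linear (Q t) /\
     forall y, domB y -> Q t y = D0 (S t y) - T0 t (D0 y)
                 - rint (fun s => T0 (t - s) (D0 (S s (B y)))) 0 t) ->
  (* limsup_{t -> 0+} ||Q(t)|| < oo *)
  (exists M delta : R, 0 < delta /\ forall t, 0 < t < delta ->
     forall y, `|Q t y| <= rC M * `|y|) ->
  (* V(tau) : dom(B) -> E linear *)
  (forall tau, 0 < tau -> linear_on domB (V tau)) ->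
  (* D subspace of dom(B) with a norm normD *)
  lin_subspace D -> (forall y, D y -> domB y) ->
  (forall y, D y -> 0 <= normD y) ->
  (forall y, D y -> normD y = 0 -> y = 0) ->
  (forall (a : R[i]) y, D y -> rC (normD (a *: y)) = `|a| * rC (normD y)) ->
  (forall y z, D y -> D z -> normD (y + z) <= normD y + normD z) ->
  0 <= r -> 0 < tmax -> 0 <= c ->
  (* the hypothesis on V_n *)
  (forall y t n, D y -> 0 <= t <= tmax -> (1 <= n)%N ->
     `|Vn T0 V S n (t / n%:R) y + rint (fun s => T0 (t - s) (D0 (S s (B y)))) 0 t|
       <= rC (c * t `^ r * ln n%:R / n%:R `^ r * normD y)) ->
  (* conclusion *)
  (forall x y t n, D y -> 0 <= t <= tmax -> (1 <= n)%N ->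
     pnorm (R0inv D0 (iter n (bbT T0 V S (t / n%:R)) (R0 D0 (x, y)))
            - calT T0 Q S t (x, y))
       <= rC (c * t `^ r * ln n%:R / n%:R `^ r * normD y))
  /\
  (forall p, 0 < p < r -> forall x y, D y ->
     exists C' : R, 0 <= C' /\
       forall t n, 0 <= t <= tmax -> (1 <= n)%N ->
         pnorm (calT T0 Q S t (x, y)
                - R0inv D0 (iter n (bbT T0 V S (t / n%:R)) (R0 D0 (x, y))))
           <= rC (C' * n%:R `^ (- p))).
Proof.
move=> _ _ _ _ _ [T0_sg _] [S_sg _] _ _ _ _ Q_def _ _ _ D_domB normD_ge0 _ _ _
  r_ge0 _ c_ge0 Vn_bound.
set J := fun y t => rint (fun s => T0 (t - s) (D0 (S s (B y)))) 0 t.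
have error_eq x y t n : D y -> 0 <= t <= tmax -> (1 <= n)%N ->
    pnorm (R0inv D0 (iter n (bbT T0 V S (t / n%:R)) (R0 D0 (x, y)))
           - calT T0 Q S t (x, y)) = `|Vn T0 V S n (t / n%:R) y + J y t|.
  move=> Dy /andP[t_ge0 _] n_ge1.
  apply: pnorm_R0inv_iter_bbT_sub_calT => //.
  exact: (Q_def t t_ge0).2 _ (D_domB y Dy).
split=> [x y t n Dy t_in n_ge1 | p p_in x y Dy].
  by rewrite error_eq //; exact: Vn_bound.
have [_ p_lt_r] := andP p_in.
exists (c * tmax `^ r * normD y / (r - p)); split.
  by rewrite divr_ge0 ?mulr_ge0 ?powR_ge0 ?normD_ge0 // subr_ge0 ltW.
move=> t n t_in n_ge1.
rewrite -opprB pnormN error_eq //.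
apply: le_trans (Vn_bound y t n Dy t_in n_ge1) _.
by rewrite lecR log_rate_le_powR // normD_ge0.
Qed.
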